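(* Let $A,G$ be $n\times n$ symmetric positive definite matrices with $G\succeq A$, let $u\in\mathbb{R}^n\setminus\{0\}$, and let $G_+=\mathrm{SR1}(A,G,u)$. Then $$\nu^2(A,G,u)\ge\frac{u^\top(G-A)G_+^{-1}(G-A)u}{u^\top Gu}.$$
   Context: $\nu(A,G,u)=\left(\frac{u^\top(G-A)G^{-1}(G-A)u}{u^\top(A-AG^{-1}A)u}\right)^{1/2}$ for $G\succeq A$, with the convention (used in the paper) that $\nu(A,G,u)=0$ when $(G-A)u=0$. $\mathrm{SR1}(A,G,u)=G$ if $(G-A)u=0$, and otherwise $\mathrm{SR1}(A,G,u)=G-\frac{(G-A)uu^\top(G-A)}{u^\top(G-A)u}$. *)

From mathcomp Require Import all_boot all_order all_algebra.
Set Implicit Arguments. Unset Strict Implicit. Unset Printing Implicit Defensive.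
Import Order.TTheory GRing.Theory Num.Theory.
Local Open Scope ring_scope.

Definition qform (R : ringType) (n : nat) (x : 'cV[R]_n) (M : 'M[R]_n) (y : 'cV[R]_n) : R :=
  (x^T *m M *m y) 0 0.

Definition symmetric (R : ringType) (n : nat) (A : 'M[R]_n) : Prop := A^T = A.

Definition spd (R : numDomainType) (n : nat) (A : 'M[R]_n) : Prop :=
  symmetric A /\ forall x : 'cV[R]_n, x != 0 -> 0 < qform x A x.

Definition loewner_ge (R : numDomainType) (n : nat) (G A : 'M[R]_n) : Prop :=
  forall x : 'cV[R]_n, 0 <= qform x (G - A) x.

Definition nu (R : rcfType) (n : nat) (A G : 'M[R]_n) (u : 'cV[R]_n) : R :=
  if (G - A) *m u == 0 then 0
  else Num.sqrt (qform u ((G - A) *m invmx G *m (G - A)) u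
                 / qform u (A - A *m invmx G *m A) u).

Definition SR1 (R : fieldType) (n : nat) (A G : 'M[R]_n) (u : 'cV[R]_n) : 'M[R]_n :=
  if (G - A) *m u == 0 then G
  else G - (qform u (G - A) u)^-1 *: ((G - A) *m u *m (u^T *m (G - A))).

From mathcomp Require Import all_boot all_order all_algebra.
From mathcomp Require Import ring.

(* Put D = G - A, y = G^-1 D u and p = G^-1 A u, so that u = p + y.  The
   numerator of nu^2 is a = y'Gy, its denominator is b = y'Gp = y'Ay + p'Dp > 0,
   and u'Du = a + b.  By Sherman-Morrison the SR1 update G - Du u'D / u'Du has
   inverse G^-1 + y y' / b, so the left-hand side is (a + a^2/b) / (a + b + u'Au),
   which falls short of a/b = nu^2 by a (u'Au) / (b u'Gu) >= 0. *)
Import Order.TTheory GRing.Theory Num.Theory.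
Local Open Scope ring_scope.

Section QuadraticForm.
Variables (R : comNzRingType) (n : nat).
Implicit Types (x y z : 'cV[R]_n) (M N : 'M[R]_n).

Lemma qform_sym x M y : M^T = M -> qform x M y = qform y M x.
Proof.
move=> sM; rewrite /qform.
have -> : y^T *m M *m x = (x^T *m M *m y)^T by rewrite !trmx_mul trmxK sM mulmxA.
by rewrite [in RHS]mxE.
Qed.

Lemma qformDm x M N y : qform x (M + N) y = qform x M y + qform x N y.
Proof. by rewrite /qform mulmxDr mulmxDl [LHS]mxE. Qed.

Lemma qformBm x M N y : qform x (M - N) y = qform x M y - qform x N y.
Proof. by rewrite /qform mulmxBr mulmxBl [LHS]mxE [X in _ + X = _]mxE. Qed.

Lemma qformZm x a M y : qform x (a *: M) y = a * qform x M y.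
Proof. by rewrite /qform -scalemxAr -scalemxAl [LHS]mxE. Qed.

Lemma qformDl x y M z : qform (x + y) M z = qform x M z + qform y M z.
Proof. by rewrite /qform linearD /= !mulmxDl [LHS]mxE. Qed.

Lemma qform0r x M : qform x M 0 = 0.
Proof. by rewrite /qform mulmx0 mxE. Qed.

Lemma qformMr x N M y : qform x N (M *m y) = qform x (N *m M) y.
Proof. by rewrite /qform !mulmxA. Qed.

Lemma qformMl M x N y : qform (M *m x) N y = qform x (M^T *m N) y.
Proof. by rewrite /qform trmx_mul !mulmxA. Qed.

Lemma qform_outer x a b y : qform x (a *m b^T) y = qform x 1%:M a * qform b 1%:M y.
Proof.
rewrite /qform !mulmx1.
have -> : x^T *m (a *m b^T) *m y = (x^T *m a) *m (b^T *m y) by rewrite !mulmxA.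
by rewrite mxE big_ord1.
Qed.

Lemma qform_sandwich x M N : M^T = M -> qform x (M *m N *m M) x = qform (M *m x) N (M *m x).
Proof. by move=> sM; rewrite qformMl qformMr sM. Qed.

Lemma qform_eqr x M y N z : M *m y = N *m z -> qform x M y = qform x N z.
Proof. by move=> eMN; rewrite -[M]mul1mx -[N]mul1mx -!qformMr eMN. Qed.

End QuadraticForm.

Arguments qform_eqr {R n} x {M y N z}.

Lemma invmx_left (R : comUnitRingType) (n : nat) (B C : 'M[R]_n) :
  C *m B = 1%:M -> invmx B = C.
Proof.
move=> CB; have [_ uB] := mulmx1_unit CB.
by rewrite -[invmx B]mul1mx -CB -mulmxA mulmxV ?mulmx1.
Qed.

Lemma sherman_morrison (R : fieldType) (n : nat) (G : 'M[R]_n) (w v : 'cV[R]_n) (c : R) :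
  G \in unitmx -> c != 0 -> c != qform v (invmx G) w ->
  invmx (G - c^-1 *: (w *m v^T)) =
    invmx G + (c - qform v (invmx G) w)^-1 *: (invmx G *m w *m (v^T *m invmx G)).
Proof.
move=> uG c0 cs; set Gi := invmx G; set s := qform v Gi w.
set Z := Gi *m w *m v^T.
have vGw : v^T *m Gi *m w = s%:M by rewrite [LHS]mx11_scalar.
have coef : (c - s)^-1 - (c - s)^-1 / c * s = c^-1.
  by field; rewrite c0 subr_eq0.
apply: invmx_left; rewrite mulmxDl !mulmxBr mulVmx // -!scalemxAl -!scalemxAr.
have -> : Gi *m w *m (v^T *m Gi) *m G = Z by rewrite !mulmxA mulmxKV.
have -> : Gi *m w *m (v^T *m Gi) *m (w *m v^T) = s *: Z.
  rewrite !mulmxA -(mulmxA (Gi *m w) v^T Gi) -(mulmxA (Gi *m w) _ w) vGw.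
  by rewrite mul_mx_scalar -scalemxAl.
by rewrite mulmxA -/Z !scalerA -scalerBl coef subrK.
Qed.

Lemma spd_unitmx {R : numFieldType} {n : nat} (M : 'M[R]_n) : spd M -> M \in unitmx.
Proof.
case=> _ pM; rewrite unitmxE unitfE; apply/negP => /det0P [v v0 vM].
have : 0 < qform v^T M v^T by apply: pM; rewrite trmx_eq0.
by rewrite /qform trmxK vM mul0mx mxE ltxx.
Qed.

Lemma nu_sqr (R : rcfType) (n : nat) (A G : 'M[R]_n) (u : 'cV[R]_n) :
  (G - A) *m u != 0 ->
  0 <= qform u ((G - A) *m invmx G *m (G - A)) u / qform u (A - A *m invmx G *m A) u ->
  nu A G u ^+ 2 =
    qform u ((G - A) *m invmx G *m (G - A)) u / qform u (A - A *m invmx G *m A) u.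
Proof. by move=> /negPf Du0 ge0; rewrite /nu Du0 sqr_sqrtr. Qed.

Lemma sr1_ratio_le (R : realFieldType) (a b q : R) :
  0 <= a -> 0 < b -> 0 <= q -> (a + a ^+ 2 / b) / (a + b + q) <= a / b.
Proof.
move=> a0 b0 q0; have s0 : 0 < a + b + q by rewrite -addrA ltr_wpDl // ltr_wpDr.
rewrite -subr_ge0.
have -> : a / b - (a + a ^+ 2 / b) / (a + b + q) = a * q / (b * (a + b + q)).
  by field; rewrite !gt_eqF.
by rewrite divr_ge0 ?mulr_ge0 // ltW ?mulr_gt0.
Qed.

Section SR1Decomposition.
Variables (R : fieldType) (n : nat) (A G : 'M[R]_n) (u : 'cV[R]_n).
Hypotheses (sA : A^T = A) (sG : G^T = G) (uG : G \in unitmx).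

Let D := G - A.
Let Gi := invmx G.
Let w := D *m u.
Let y := Gi *m w.
Let p := Gi *m (A *m u).
Let a := qform u (D *m Gi *m D) u.
Let b := qform u (A - A *m Gi *m A) u.

Let sD : D^T = D. Proof. by rewrite /D linearB /= sA sG. Qed.
Let Gy : G *m y = w. Proof. exact: mulKVmx. Qed.
Let Gp : G *m p = A *m u. Proof. exact: mulKVmx. Qed.
Let GiG : Gi *m G = 1%:M. Proof. exact: mulVmx. Qed.

Let addpy : p + y = u.
Proof. by rewrite /p /y -mulmxDr /w /D mulmxBl addrC subrK mulKmx. Qed.

Let Dp : D *m p = A *m y.
Proof. by rewrite {1}/D mulmxBl Gp -mulmxBr -{1}addpy addrC addKr. Qed.

Let a_w : a = qform w Gi w.
Proof. by rewrite /a qform_sandwich. Qed.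

Let b_yGp : b = qform y G p.
Proof.
rewrite /b qformBm qform_sandwich // -Gp -(qform_eqr u Gp).
rewrite -qform_sandwich // mulmxV // mul1mx.
by rewrite -[in X in X - _]addpy qformDl addrC addKr.
Qed.

Lemma qform_nu_num : a = qform y G y.
Proof. by rewrite a_w -Gy -qform_sandwich // mulmxV // mul1mx. Qed.

Lemma qform_nu_den : b = qform y A y + qform p D p.
Proof.
rewrite b_yGp -[G](subrK A) -/D qformDm addrC (qform_eqr _ Dp).
by rewrite [qform y A p]qform_sym // (qform_eqr _ Dp) addrC.
Qed.

Lemma qform_GA_decomp : qform u D u = a + b.
Proof.
rewrite -(qform_eqr u Gy) -{1}addpy qformDl qform_sym //.
by rewrite -b_yGp -qform_nu_num addrC.
Qed.

Lemma invmx_SR1 : D *m u != 0 -> a + b != 0 -> b != 0 ->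
  invmx (SR1 A G u) = Gi + b^-1 *: (y *m y^T).
Proof.
move=> /negPf Du0 c0 b0.
have uD : u^T *m D = w^T by rewrite /w trmx_mul sD.
have yT : y^T = w^T *m Gi by rewrite /y trmx_mul trmx_inv sG.
have ab : a + b != qform w Gi w by rewrite -a_w -subr_eq0 addrAC subrr add0r.
rewrite /SR1 -/D Du0 uD qform_GA_decomp sherman_morrison // -a_w.
by rewrite addrAC subrr add0r -/Gi -/w -/y -yT.
Qed.

Lemma qform_SR1_num : D *m u != 0 -> a + b != 0 -> b != 0 ->
  qform u (D *m invmx (SR1 A G u) *m D) u = a + a ^+ 2 / b.
Proof.
move=> Du0 c0 b0; rewrite qform_sandwich // invmx_SR1 // qformDm -a_w.
rewrite qformZm qform_outer qform_sym ?trmx1 //.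
rewrite -/w -Gy qformMr mul1mx -qform_nu_num.
by rewrite mulrC expr2.
Qed.
End SR1Decomposition.

Theorem lemma5 (R : rcfType) (n : nat) (A G : 'M[R]_n) (u : 'cV[R]_n) :
  spd A -> spd G -> loewner_ge G A -> u != 0 ->
  qform u ((G - A) *m invmx (SR1 A G u) *m (G - A)) u / qform u G u
    <= nu A G u ^+ 2.
Proof.
move=> hA hG hGA u0; have uG := spd_unitmx _ hG.
case: hA => sA pA; case: hG => sG pG.
have [Du0|Du0] := eqVneq ((G - A) *m u) 0.
  by rewrite -qformMr Du0 qform0r mul0r sqr_ge0.
set y := invmx G *m ((G - A) *m u).
have y0 : y != 0.
  by apply: contra_neq Du0 => y0; rewrite -(mulKVmx uG ((G - A) *m u)) -/y y0 mulmx0.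
have a_gt0 := pG y y0; rewrite -qform_nu_num // in a_gt0.
have b_gt0 : 0 < qform u (A - A *m invmx G *m A) u.
  by rewrite qform_nu_den // ltr_wpDr ?pA //; apply: hGA.
have g_split : qform u G u = qform u ((G - A) *m invmx G *m (G - A)) u
    + qform u (A - A *m invmx G *m A) u + qform u A u.
  by rewrite -qform_GA_decomp // -qformDm subrK.
rewrite qform_SR1_num ?gt_eqF ?addr_gt0 // g_split.
rewrite nu_sqr //; last by rewrite divr_ge0 // ltW.
by apply: sr1_ratio_le; rewrite ?ltW ?pA.
Qed.
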